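(* For every integer $n\ge 1$, the polytope $\overline{Q}_n=\sum_{S\in\mathcal{I}_n}\Delta_S\subseteq\mathbb{R}^{n+1}$ is simple and $n$-dimensional.
   Context: The sum is a Minkowski sum. $\mathcal{I}_n=\{S\cup\{n+1\} : S\subseteq[n],\ |S|\in\{1,2\}\}$, and for $S\subseteq[n+1]$, $\Delta_S=\mathrm{conv}\{e_i: i\in S\}$ with $e_i$ the standard basis vectors of $\mathbb{R}^{n+1}$. A $d$-dimensional polytope is simple if each vertex lies in exactly $d$ facets. *)

From HB Require Import structures.
From mathcomp Require Import all_boot all_order all_algebra.
From mathcomp Require Import reals.
Set Implicit Arguments. Unset Strict Implicit. Unset Printing Implicit Defensive.
Import Order.TTheory GRing.Theory Num.Theory.
Local Open Scope ring_scope.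

Section Polytopes.
Variable R : realType.
Variable m : nat.

Definition pt := 'rV[R]_m.
Definition region := pt -> Prop.

Definition e_ (i : 'I_m) : pt := \row_(j < m) (i == j)%:R.

Definition conv (k : nat) (p : 'I_k -> pt) : region :=
  fun x => exists lam : 'I_k -> R,
    (forall i, 0 <= lam i) /\ \sum_(i < k) lam i = 1 /\
    x = \sum_(i < k) lam i *: p i.

Definition Delta (S : {set 'I_m}) : region :=
  conv (fun i : 'I_#|S| => e_ (enum_val i)).

Definition minkowski_sum (I : {set {set 'I_m}}) (P : {set 'I_m} -> region) : region :=
  fun x => exists f : {set 'I_m} -> pt,
    (forall S, S \in I -> P S (f S)) /\ x = \sum_(S in I) f S.

Definition dot (a x : pt) : R := \sum_(j < m) a 0 j * x 0 j.

(* affine dimension: P has dimension d iff d is the maximal rank of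
   the family of differences x_i - x_0 of finitely many points of P
   (in particular P is nonempty) *)
Definition diffmx (k : nat) (x : 'I_k.+1 -> pt) : 'M[R]_(k, m) :=
  \matrix_(i < k, j < m) (x (lift ord0 i) 0 j - x ord0 0 j).

Definition has_dim (P : region) (d : nat) : Prop :=
  (exists k (x : 'I_k.+1 -> pt), (forall i, P (x i)) /\ \rank (diffmx x) = d) /\
  (forall k (x : 'I_k.+1 -> pt), (forall i, P (x i)) -> (\rank (diffmx x) <= d)%N).

Definition is_face (P F : region) : Prop :=
  exists (a : pt) (b : R), (forall x, P x -> dot a x <= b) /\
    F = (fun x => P x /\ dot a x = b).

Definition is_vertex (P : region) (v : pt) : Prop :=
  is_face P (fun x => x = v).

Definition is_facet (P F : region) (d : nat) : Prop :=
  is_face P F /\ has_dim F d.-1.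

Definition is_simple (P : region) : Prop :=
  exists d : nat, has_dim P d /\
  forall v, is_vertex P v ->
    exists F : 'I_d -> region, injective F /\
      (forall i, is_facet P (F i) d /\ F i v) /\
      (forall G, is_facet P G d -> G v -> exists i, G = F i).

End Polytopes.

(* I_n = { S u {n+1} : S subset [n], |S| in {1,2} }, with coordinates
   1..n+1 indexed by 'I_n.+1 and n+1 being ord_max *)
Definition I_n (n : nat) : {set {set 'I_n.+1}} :=
  [set S : {set 'I_n.+1} | (ord_max \in S) && ((#|S| == 2) || (#|S| == 3))].

Definition Qbar (R : realType) (n : nat) : region R n.+1 :=
  minkowski_sum (I_n n) (@Delta R n.+1).
Arguments Qbar R n : clear implicits.

(* Qbar is the Minkowski sum of the simplices Delta_S, so a linear functional c
   is maximised on Qbar exactly at the sums of points maximising c on each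
   Delta_S; the points selpt g = \sum_S e_(g S), for choices g S \in S, lie in
   Qbar.  All points of Qbar have coordinate sum |I_n|, while changing the
   choice on one S moves selpt g by e_k - e_(g S); this gives n independent
   directions, so dim Qbar = n.  Conversely, if a labelling of the coordinates
   is constant on the c-maximal coordinates of every S, the indicators of its
   s labels are s independent functionals constant on the face of c, whose
   dimension is thus at most n + 1 - s.
   A vertex v is the unique maximiser of some a, so a has a unique maximiser in
   each S.  For every coordinate i other than the coordinate t = n+1 common to
   all S, the face {x_i = 0} (if a_i < a_t) or the face of the indicator of
   {l | a_l >= a_i} (otherwise) is a facet through v.  Conversely the
   functional c of a facet through v admits no labelling with three labels,
   which forces it to be two-valued: lower at a single coordinate, or higher
   exactly on an up-set of a.  As the coordinate sum is constant, c then
   defines one of the facets above. *)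
From Pilot Require Import Defs.
From HB Require Import structures.
From mathcomp Require Import all_boot all_order all_algebra.
From mathcomp Require Import reals.
From mathcomp Require Import ring lra zify.
From Stdlib Require Import FunctionalExtensionality PropExtensionality.
Set Implicit Arguments. Unset Strict Implicit. Unset Printing Implicit Defensive.
Import Order.TTheory GRing.Theory Num.Theory.

Section Faces.
Variables (R : realType) (m : nat).
Local Open Scope ring_scope.
Implicit Types (P G : region R m) (a c x v : pt R m).

Lemma vertex_unique_argmax P v : is_vertex P v -> exists a, [/\ P v,
  forall x, P x -> dot a x <= dot a v & forall x, P x -> dot a x = dot a v -> x = v].
Proof.
move=> [a [b [a_le ePv]]].
have ePx x : (x = v) = (P x /\ dot a x = b) := congr1 (fun F => F x) ePv.
have [Pv eb] : P v /\ dot a v = b by rewrite -ePx.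
by exists a; rewrite eb; split=> // x Px eax; rewrite ePx.
Qed.

Lemma face_through_point P G v : is_face P G -> G v -> exists c,
  (forall x, P x -> dot c x <= dot c v) /\ G = (fun x => P x /\ dot c x = dot c v).
Proof. move=> [c [b [c_le eG]]]; rewrite eG => -[_ eb]; subst b; by exists c. Qed.

End Faces.

Section MinkowskiSimplices.
Variables (R : realType) (m : nat) (I : {set {set 'I_m}}).
Local Open Scope ring_scope.
Local Notation pt := (pt R m).
Local Notation P := (minkowski_sum I (@Delta R m)).
Implicit Types (a c w x : pt) (S : {set 'I_m}) (g : {set 'I_m} -> 'I_m).

Lemma dotZr a k x : dot a (k *: x) = k * dot a x.
Proof. by rewrite /dot mulr_sumr; apply: eq_bigr => j _; rewrite mxE mulrCA. Qed.

Lemma dot_sumr a (J : Type) (r : seq J) (B : pred J) (F : J -> pt) :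
  dot a (\sum_(i <- r | B i) F i) = \sum_(i <- r | B i) dot a (F i).
Proof.
rewrite /dot exchange_big /=; apply: eq_bigr => j _.
by rewrite summxE mulr_sumr.
Qed.

Lemma dot_e a i : dot a (e_ R i) = a 0 i.
Proof.
rewrite /dot (bigD1 i) //= big1 => [|j ji]; first by rewrite mxE eqxx mulr1 addr0.
by rewrite mxE eq_sym (negbTE ji) mulr0.
Qed.

Lemma e_dot x j : dot (e_ R j) x = x 0 j.
Proof.
rewrite /dot (bigD1 j) //= big1 => [|k kj]; first by rewrite mxE eqxx mul1r addr0.
by rewrite mxE eq_sym (negbTE kj) mul0r.
Qed.

Lemma Delta_dot S p : Delta S p -> exists lam : 'I_#|S| -> R,
  [/\ forall l, 0 <= lam l, \sum_l lam l = 1 &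
      forall a, dot a p = \sum_l lam l * a 0 (enum_val l)].
Proof.
move=> [lam [lam_ge0 [lam1 ->]]]; exists lam; split=> // a.
by rewrite dot_sumr; apply: eq_bigr => l _; rewrite dotZr dot_e.
Qed.

Lemma Delta_e S i : i \in S -> Delta S (e_ R i).
Proof.
move=> iS; pose l0 := enum_rank_in iS i.
exists (fun l => (l == l0)%:R); split; first by move=> l; rewrite ler0n.
split; first by rewrite (bigD1 l0) //= eqxx big1 ?addr0 // => l /negbTE ->.
rewrite (bigD1 l0) //= eqxx scale1r enum_rankK_in // big1 ?addr0 //.
by move=> l /negbTE ->; rewrite scale0r.
Qed.

Lemma Delta_dot_le S p a b : Delta S p -> (forall l, l \in S -> a 0 l <= b) ->
  dot a p <= b.
Proof.
move=> /Delta_dot [lam [lam_ge0 lam1 ->]] a_le.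
rewrite -[b]mul1r -lam1 mulr_suml; apply: ler_sum => l _.
by apply: ler_wpM2l => //; apply/a_le/enum_valP.
Qed.

Lemma Delta_dot_tie S p c w q : Delta S p ->
  (forall l, l \in S -> c 0 l <= c 0 q) -> dot c p = c 0 q ->
  (forall l, l \in S -> c 0 l = c 0 q -> w 0 l = w 0 q) -> dot w p = w 0 q.
Proof.
move=> /Delta_dot [lam [lam_ge0 lam1 dotp]] c_le cp w_tie.
have slack0 l : lam l * (c 0 q - c 0 (enum_val l)) = 0.
  apply: (@psumr_eq0P _ _ predT (fun l => lam l * (c 0 q - c 0 (enum_val l)))) => //.
    by move=> l' _; rewrite mulr_ge0 // subr_ge0 c_le ?enum_valP.
  under eq_bigr do rewrite mulrBr.
  by rewrite sumrB -mulr_suml lam1 mul1r -dotp cp subrr.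
rewrite dotp -[w 0 q]mul1r -lam1 mulr_suml; apply: eq_bigr => l _.
move/eqP: (slack0 l); rewrite mulf_eq0 subr_eq0 => /orP[/eqP->|/eqP ec].
  by rewrite !mul0r.
by rewrite w_tie ?enum_valP.
Qed.

Definition selector g := forall S, S \in I -> g S \in S.

Definition selpt g : pt := \sum_(S in I) e_ R (g S).

Definition reselect g S0 k S := if S == S0 then k else g S.

Definition maxsel c g :=
  forall S, S \in I -> g S \in S /\ forall l, l \in S -> c 0 l <= c 0 (g S).

Definition tie_invariant (T : Type) c g (f : 'I_m -> T) :=
  forall S, S \in I -> forall l, l \in S -> c 0 l = c 0 (g S) -> f l = f (g S).

Definition prefer c k g S :=
  if (k \in S) && [forall l in S, c 0 l <= c 0 k] then k else g S.

Lemma selpt_in g : selector g -> P (selpt g).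
Proof. by move=> gS; exists (fun S => e_ R (g S)); split=> // S /gS /Delta_e. Qed.

Lemma maxsel_selector c g : maxsel c g -> selector g.
Proof. by move=> cg S /cg []. Qed.

Lemma reselect_selector g S0 k :
  selector g -> k \in S0 -> selector (reselect g S0 k).
Proof. by move=> gS kS0 S SI; rewrite /reselect; case: eqP => [->|_] //; apply: gS. Qed.

Lemma maxsel_reselect c g S0 k : maxsel c g -> S0 \in I -> k \in S0 ->
  c 0 k = c 0 (g S0) -> maxsel c (reselect g S0 k).
Proof.
move=> cg S0I kS0 ck S SI; rewrite /reselect; case: eqP => [->|_]; last exact: cg.
by split=> // l lS; rewrite ck; apply: (cg S0 S0I).2.
Qed.

Lemma maxsel_prefer c k g : maxsel c g -> maxsel c (prefer c k g).
Proof.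
move=> cg S SI; rewrite /prefer; case: andP => [[kS /forall_inP]|_] //.
exact: cg.
Qed.

Lemma dot_selpt a g : dot a (selpt g) = \sum_(S in I) a 0 (g S).
Proof. by rewrite dot_sumr; apply: eq_bigr => S _; rewrite dot_e. Qed.

Lemma dot_selpt_reselect a g S0 k : S0 \in I ->
  dot a (selpt (reselect g S0 k)) = dot a (selpt g) + a 0 k - a 0 (g S0).
Proof.
move=> S0I; rewrite !dot_selpt (bigD1 S0) //= [in RHS](bigD1 S0) //= /reselect eqxx.
rewrite (eq_bigr (fun S => a 0 (g S))) => [|S /andP[_ /negbTE->] //].
by ring.
Qed.

Lemma dot_le_maxsel c g x : maxsel c g -> P x -> dot c x <= dot c (selpt g).
Proof.
move=> cg [f [Pf ->]]; rewrite dot_sumr dot_selpt; apply: ler_sum => S SI.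
by apply: Delta_dot_le (Pf S SI) _ => l; apply: (cg S SI).2.
Qed.

Lemma dot_maxsel_face c g w x : maxsel c g -> P x ->
  dot c x = dot c (selpt g) -> tie_invariant c g (fun l => w 0 l) ->
  dot w x = dot w (selpt g).
Proof.
move=> cg [f [Pf ->]] ecx w_tie; rewrite dot_sumr dot_selpt in ecx.
have slack_ge0 S : S \in I -> 0 <= c 0 (g S) - dot c (f S).
  by move=> SI; rewrite subr_ge0; apply: Delta_dot_le (Pf S SI) _ => l /(cg S SI).2.
have tight S : S \in I -> dot c (f S) = c 0 (g S).
  move=> SI; apply/eqP; rewrite eq_sym -subr_eq0; apply/eqP.
  by apply: (psumr_eq0P slack_ge0) => //; rewrite sumrB ecx subrr.
rewrite dot_sumr dot_selpt; apply: eq_bigr => S SI.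
apply: Delta_dot_tie (Pf S SI) _ (tight S SI) (w_tie S SI).
exact: (cg S SI).2.
Qed.

Lemma dot_affine c w (gam del : R) x : (forall l, c 0 l = gam + del * w 0 l) ->
  P x -> dot c x = gam * #|I|%:R + del * dot w x.
Proof.
move=> cw [f [Pf ->]]; rewrite !dot_sumr mulr_sumr mulr_natr -sumr_const -big_split /=.
apply: eq_bigr => S SI; have [lam [_ lam1 dotf]] := Delta_dot (Pf S SI).
rewrite !dotf mulr_sumr -[gam]mulr1 -lam1 mulr_sumr -big_split /=.
by apply: eq_bigr => l _; rewrite cw; ring.
Qed.

End MinkowskiSimplices.

Section Rank.
Variable F : fieldType.
Local Open Scope ring_scope.

Lemma mxrank_id_cols r k (M : 'M[F]_(r, k)) (col : 'I_r -> 'I_k) :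
  (forall i j, M i (col j) = (i == j)%:R) -> \rank M = r.
Proof.
move=> Mcol; apply/eqP; rewrite eqn_leq rank_leq_row /=.
have MC1 : M *m \matrix_(j, i) (j == col i)%:R = 1%:M.
  apply/matrixP => i i'; rewrite !mxE (bigD1 (col i')) //= big1 => [|j ji'].
    by rewrite mxE eqxx mulr1 addr0 Mcol.
  by rewrite mxE (negbTE ji') mulr0.
by rewrite -{1}(mxrank1 F r) -MC1 mxrankM_maxl.
Qed.

Lemma mxrank_orth_le r k s (A : 'M[F]_(r, k)) (W : 'M[F]_(s, k)) :
  A *m W^T = 0 -> \rank W = s -> (\rank A + s <= k)%N.
Proof.
move=> AW rW.
have : (W <= kermx A^T)%MS by rewrite sub_kermx -[W]trmxK -trmx_mul AW trmx0.
move/mxrankS; rewrite mxrank_ker mxrank_tr rW.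
have := rank_leq_col A; lia.
Qed.

End Rank.

Section FaceRank.
Variables (R : realType) (m : nat) (I : {set {set 'I_m}}).
Local Open Scope ring_scope.
Local Notation pt := (pt R m).
Local Notation P := (minkowski_sum I (@Delta R m)).
Local Notation selpt := (selpt R I).

(* Moving the selector of S_j from g0 S_j to k_j changes the point by
   e_(k j) - e_(g0 S_j); the coordinates k j then exhibit an identity minor. *)
Lemma rank_reselect (Q : region R m) g0 r (k : 'I_r -> 'I_m) (S : 'I_r -> {set 'I_m}) :
  (forall j, S j \in I) -> (forall i j, g0 (S i) != k j) -> injective k ->
  Q (selpt g0) -> (forall j, Q (selpt (reselect g0 (S j) (k j)))) ->
  exists x : 'I_r.+1 -> pt, (forall j, Q (x j)) /\ \rank (Defs.diffmx x) = r.
Proof.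
move=> SI g0k k_inj Qg0 Qk.
exists (fun j => if unlift ord0 j is Some j' then selpt (reselect g0 (S j') (k j'))
                 else selpt g0).
split; first by move=> j; case: unlift.
apply: (mxrank_id_cols (col := k)) => i j.
rewrite mxE liftK unlift_none -!e_dot dot_selpt_reselect // !e_dot !mxE.
by rewrite (inj_eq k_inj) [k j == _]eq_sym (negbTE (g0k i j)) eq_sym subr0 addrC addKr.
Qed.

Lemma face_rank_le c g s (f : 'I_m -> nat) (rho : 'I_s -> 'I_m) k (x : 'I_k.+1 -> pt) :
  maxsel I c g -> tie_invariant I c g f -> (forall r, f (rho r) = r) ->
  (forall j, P (x j) /\ dot c (x j) = dot c (selpt g)) ->
  (\rank (Defs.diffmx x) + s <= m)%N.
Proof.
move=> cg f_tie f_rho x_face.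
apply: (@mxrank_orth_le _ _ _ _ _ (\matrix_(r, j) (f j == r)%:R)).
  apply/matrixP => i r; rewrite !mxE.
  pose wr : pt := \row_j (f j == r)%:R.
  have wr_face j : dot wr (x j) = dot wr (selpt g).
    have [Px cx] := x_face j; apply: dot_maxsel_face cg Px cx _ => S SI l lS cl.
    by rewrite !mxE (f_tie S SI l lS cl).
  transitivity (dot wr (x (lift ord0 i)) - dot wr (x ord0)); last first.
    by rewrite !wr_face subrr.
  rewrite /dot -sumrB; apply: eq_bigr => j _; rewrite !mxE.
  by rewrite mulrBl mulrC [X in _ - X]mulrC.
by apply: (mxrank_id_cols (col := rho)) => i j; rewrite mxE f_rho eq_sym.
Qed.

End FaceRank.

Section Qbar.
Variables (R : realType) (n : nat).
Local Open Scope ring_scope.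
(* [t] is the coordinate n+1 shared by all S in I_n; [lift t] enumerates the others. *)
Local Notation t := (@ord_max n).
Local Notation II := (I_n n).
Local Notation Q := (Qbar R n).
Local Notation pt := (pt R n.+1).
Local Notation selpt := (selpt R II).
Implicit Types (a c w x y v : pt) (S : {set 'I_n.+1}) (p q l : 'I_n.+1).

Lemma I_n_max S : S \in II -> t \in S.
Proof. by rewrite inE => /andP[]. Qed.

Lemma I_n_pair p : p != t -> [set p; t] \in II.
Proof. by move=> pt; rewrite inE !inE eqxx orbT cards2 pt. Qed.

Lemma I_n_triple p q : p != t -> q != t -> p != q -> p |: [set q; t] \in II.
Proof.
move=> pt qt pq; rewrite inE !inE eqxx !orbT /= cardsU1 cards2 qt !inE.
by rewrite (negbTE pq) (negbTE pt).
Qed.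

Lemma lift_t_neq i : lift t i != t.
Proof. by rewrite eq_sym neq_lift. Qed.

Definition gmax c S := Order.arg_max t (mem S) (fun l => c 0 l).

Lemma maxsel_gmax c : maxsel II c (gmax c).
Proof.
move=> S /I_n_max tS; rewrite /gmax.
by case: arg_maxP => // l lS l_max; split=> // l' /l_max.
Qed.

Lemma maxsel_const_t c : (forall l, c 0 l <= c 0 t) -> maxsel II c (fun _ => t).
Proof. by move=> c_le S SI; split; [exact: I_n_max | move=> l _; apply: c_le]. Qed.

Lemma dim_Qbar : has_dim Q n.
Proof.
have t_max : maxsel II (0 : pt) (fun _ => t).
  by apply: maxsel_const_t => l; rewrite !mxE lexx.
split.
  exists n; apply: (rank_reselect (I := II) (Q := Q) (g0 := fun _ => t) (k := lift t)
    (S := fun j => [set lift t j; t])).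
  - by move=> j; apply/I_n_pair/lift_t_neq.
  - by move=> i j; apply: neq_lift.
  - exact: lift_inj.
  - exact/selpt_in/maxsel_selector/t_max.
  - move=> j; apply/selpt_in/reselect_selector; first exact/maxsel_selector/t_max.
    by rewrite !inE eqxx.
move=> k x Qx.
have dot0 y : dot 0 y = 0 by rewrite /dot big1 // => j _; rewrite mxE mul0r.
have := face_rank_le (f := fun _ => 0%N) (rho := fun _ : 'I_1 => t) (x := x) t_max.
rewrite addn1 ltnS; apply=> // [r|j]; first by rewrite (ord1 r).
by split; [exact: Qx | rewrite !dot0].
Qed.

(* For each of the n - 1 coordinates k other than t and lift t i, a reselection
   on {k, t} or {k, lift t i, t} moves the choice to k at no cost in w. *)
Lemma face_rank_two_levels w (i : 'I_n) :
  (forall l, l != lift t i ->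
     w 0 l = w 0 t \/ w 0 l = w 0 (lift t i) /\ w 0 t <= w 0 (lift t i)) ->
  exists x : 'I_n.-1.+1 -> pt,
    (forall j, Q (x j) /\ forall y, Q y -> dot w y <= dot w (x j)) /\
    \rank (Defs.diffmx x) = n.-1.
Proof.
move=> w_two; set p := lift t i; have pt : p != t := lift_t_neq i.
pose g0 := prefer w p (prefer w t (gmax w)).
have g0_max : maxsel II w g0 by do 2 apply: maxsel_prefer; apply: maxsel_gmax.
pose k r := lift t (lift i r).
have kt r : k r != t by exact: lift_t_neq.
have k_inj : injective k by move=> r1 r2 /lift_inj/lift_inj.
have kp r : k r != p by rewrite (inj_eq lift_inj) eq_sym neq_lift.
pose S r := if w 0 (k r) == w 0 t then [set k r; t] else k r |: [set p; t].
have SI r : S r \in II.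
  rewrite /S; case: ifP => _; first exact: I_n_pair.
  by apply: I_n_triple; rewrite // lift_t_neq.
have kS r : k r \in S r by rewrite /S; case: ifP => _; rewrite !inE eqxx.
have g0S r : g0 (S r) = if w 0 (k r) == w 0 t then t else p.
  rewrite /S /g0 /prefer; case: eqP => [wkt | /eqP wkt].
    rewrite !inE eq_sym (negbTE (kp r)) (negbTE pt) eqxx orbT /=.
    by case: forall_inP => // -[] l; rewrite !inE => /orP[]/eqP->; rewrite ?wkt.
  have [wkp wtp] : w 0 (k r) = w 0 p /\ w 0 t <= w 0 p.
    by case: (w_two _ (kp r)) => // wk; case/eqP: wkt.
  rewrite !inE eqxx orbT /=; case: forall_inP => // -[] l.
  by rewrite !inE => /or3P[]/eqP->; rewrite ?wkp.
have face_pt g : maxsel II w g ->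
    Q (selpt g) /\ forall y, Q y -> dot w y <= dot w (selpt g).
  by move=> wg; split=> [|y]; [exact/selpt_in/maxsel_selector/wg | exact: dot_le_maxsel].
apply: (rank_reselect (I := II) (Q := fun x => Q x /\ forall y, Q y -> dot w y <= dot w x)
  (g0 := g0) (k := k) (S := S)) => // [r j||r].
- by rewrite g0S; case: ifP => _; rewrite eq_sym.
- exact: face_pt g0_max.
apply: face_pt; apply: maxsel_reselect => //.
rewrite g0S; case: eqP => // /eqP wkt.
by case: (w_two _ (kp r)) => [wk|[]//]; rewrite wk eqxx in wkt.
Qed.

Section Vertex.
Variables a v : pt.
Hypothesis v_in : Q v.
Hypothesis a_le : forall x, Q x -> dot a x <= dot a v.
Hypothesis a_uniq : forall x, Q x -> dot a x = dot a v -> x = v.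
Local Notation ga := (gmax a).

Lemma vertex_selpt : v = selpt ga.
Proof.
have Qga : Q (selpt ga) by exact/selpt_in/maxsel_selector/maxsel_gmax.
apply/esym/a_uniq => //; apply/eqP; rewrite eq_le a_le //=.
exact: dot_le_maxsel (maxsel_gmax a) v_in.
Qed.

Lemma reselect_in S k : S \in II -> k \in S -> Q (selpt (reselect ga S k)).
Proof. by move=> SI kS; apply/selpt_in/reselect_selector/kS/maxsel_selector/maxsel_gmax. Qed.

Lemma ga_strict S l : S \in II -> l \in S -> l != ga S -> a 0 l < a 0 (ga S).
Proof.
move=> SI lS lg; rewrite lt_neqAle (maxsel_gmax a SI).2 // andbT.
apply: contraNneq lg => al.
have := a_uniq (reselect_in SI lS); rewrite dot_selpt_reselect // al -vertex_selpt.
move=> /(_ (addrK _ _)) /(congr1 (dot (e_ R l))).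
rewrite dot_selpt_reselect // !e_dot !mxE eqxx -vertex_selpt.
by case: eqP => // _ /eqP; rewrite subr0 -subr_eq0 addrAC subrr add0r oner_eq0.
Qed.

Lemma gaE S q : S \in II -> q \in S -> (forall l, l \in S -> a 0 l <= a 0 q) -> ga S = q.
Proof.
move=> SI qS q_max; apply/eqP; rewrite eq_sym; apply: contraT => qg.
by have := ga_strict SI qS qg; rewrite ltNge q_max // (maxsel_gmax a SI).1.
Qed.

Lemma valid_maxsel c : (forall x, Q x -> dot c x <= dot c v) -> maxsel II c ga.
Proof.
move=> c_le S SI; have [gS _] := maxsel_gmax a SI; split=> // l lS.
have := c_le _ (reselect_in SI lS); rewrite dot_selpt_reselect // -vertex_selpt.
by move=> h; lra.
Qed.

Lemma a_neq_t p : p != t -> a 0 p != a 0 t.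
Proof.
move=> pt; have SI := I_n_pair pt.
have pS : p \in [set p; t] by rewrite !inE eqxx.
have tS : t \in [set p; t] by rewrite !inE eqxx orbT.
have := (maxsel_gmax a SI).1; rewrite !inE => /orP[]/eqP g_eq.
  by have := ga_strict SI tS; rewrite g_eq eq_sym => /(_ pt) /gt_eqF->.
by have := ga_strict SI pS; rewrite g_eq => /(_ pt) /lt_eqF->.
Qed.

Lemma a_neq_above p q : p != t -> q != t -> p != q -> a 0 t < a 0 p -> a 0 p != a 0 q.
Proof.
move=> pt qt pq atp; have SI := I_n_triple pt qt pq.
have pS : p \in p |: [set q; t] by rewrite !inE eqxx.
have qS : q \in p |: [set q; t] by rewrite !inE eqxx orbT.
have := (maxsel_gmax a SI).1; rewrite !inE => /or3P[]/eqP g_eq.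
- by have := ga_strict SI qS; rewrite g_eq eq_sym => /(_ pq) /gt_eqF->.
- by have := ga_strict SI pS; rewrite g_eq => /(_ pq) /lt_eqF->.
- by have := (maxsel_gmax a SI).2 p pS; rewrite g_eq leNgt atp.
Qed.

Lemma lift_low_or_up i : a 0 (lift t i) < a 0 t \/ a 0 t < a 0 (lift t i).
Proof. by have := a_neq_t (lift_t_neq i); rewrite neq_lt => /orP[]; [left | right]. Qed.

Definition facet_fun (i : 'I_n) : pt :=
  if a 0 (lift t i) < a 0 t then - e_ R (lift t i)
  else \row_l (a 0 (lift t i) <= a 0 l)%R%:R.

Definition face_at c : region R n.+1 := fun x => Q x /\ dot c x = dot c v.

Definition facet i := face_at (facet_fun i).

Lemma facet_fun_low i l :
  a 0 (lift t i) < a 0 t -> facet_fun i 0 l = - (lift t i == l)%:R.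
Proof. by rewrite /facet_fun => ->; rewrite !mxE. Qed.

Lemma facet_fun_up i l :
  a 0 t < a 0 (lift t i) -> facet_fun i 0 l = (a 0 (lift t i) <= a 0 l)%R%:R.
Proof. by rewrite /facet_fun => /lt_gtF->; rewrite mxE. Qed.

Lemma facet_fun_t_neq i : facet_fun i 0 t != facet_fun i 0 (lift t i).
Proof.
case: (lift_low_or_up i) => [low|up].
  rewrite !facet_fun_low // eqxx (negbTE (lift_t_neq i)) oppr0.
  by rewrite eq_sym oppr_eq0 oner_eq0.
by rewrite !facet_fun_up // lexx leNgt up eq_sym oner_eq0.
Qed.

Lemma maxsel_facet_fun i : maxsel II (facet_fun i) ga.
Proof.
move=> S SI; have [gS g_max] := maxsel_gmax a SI; split=> // l lS.
case: (lift_low_or_up i) => [low|up].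
  rewrite !facet_fun_low //; have -> : (lift t i == ga S) = false.
    by apply: contraTF (g_max t (I_n_max SI)) => /eqP<-; rewrite -ltNge.
  by rewrite oppr0 oppr_le0 ler0n.
rewrite !facet_fun_up // ler_nat; case: (boolP (a 0 (lift t i) <= a 0 l)) => // al.
by rewrite (le_trans al (g_max l lS)).
Qed.

Lemma facet_valid i x : Q x -> dot (facet_fun i) x <= dot (facet_fun i) v.
Proof. by rewrite vertex_selpt; apply: dot_le_maxsel (maxsel_facet_fun i). Qed.

Lemma facet_is_face i : is_face Q (facet i).
Proof. by exists (facet_fun i), (dot (facet_fun i) v); split => // x; apply: facet_valid. Qed.

Lemma facet_reselect i S k : S \in II -> k \in S ->
  facet i (selpt (reselect ga S k)) <-> facet_fun i 0 k = facet_fun i 0 (ga S).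
Proof.
move=> SI kS; rewrite /facet /face_at vertex_selpt dot_selpt_reselect //.
by split=> [[_ e]|e]; [lra | split; [exact: reselect_in | lra]].
Qed.

Lemma facet_dim i : has_dim (facet i) n.-1.
Proof.
split.
  have [|x [x_max rk]] := @face_rank_two_levels (facet_fun i) i.
    move=> l lp; case: (lift_low_or_up i) => [low|up].
      by left; rewrite !facet_fun_low // eq_sym (negbTE lp) (negbTE (lift_t_neq i)).
    rewrite !facet_fun_up // lexx (leNgt _ (a 0 t)) up /=.
    by case: (a 0 (lift t i) <= a 0 l)%R; [right; rewrite ler01 | left].
  exists n.-1, x; split=> // j; have [Qx x_le] := x_max j.
  by split=> //; apply/eqP; rewrite eq_le facet_valid // x_le.
move=> k x Fx.
suff : (\rank (Defs.diffmx x) + 2 <= n.+1)%N by have := ltn_ord i; lia.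
apply: (face_rank_le
  (f := fun l => nat_of_bool (facet_fun i 0 l == facet_fun i 0 (lift t i)))
  (rho := fun r : 'I_2 => if r == ord0 then t else lift t i) (maxsel_facet_fun i)).
- by move=> S SI l lS ->.
- by case=> [[|[|]]] //= _; rewrite ?(negbTE (facet_fun_t_neq i)) ?eqxx.
- by move=> j; have [Qx e] := Fx j; split=> //; rewrite e -vertex_selpt.
Qed.

Lemma facet_low_sep i j : i != j -> a 0 (lift t i) < a 0 t ->
  exists y, facet j y /\ ~ facet i y.
Proof.
move=> ij low; set p := lift t i.
have SI := I_n_pair (lift_t_neq i).
have pS : p \in [set p; t] by rewrite !inE eqxx.
have gt : ga [set p; t] = t.
  by apply: gaE; rewrite ?I_n_max // => l; rewrite !inE => /orP[]/eqP->; rewrite ?(ltW low).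
exists (selpt (reselect ga [set p; t] p)); rewrite !facet_reselect // gt.
split; last first.
  rewrite !facet_fun_low // eqxx (negbTE (lift_t_neq i)) oppr0.
  by move/eqP; rewrite oppr_eq0 oner_eq0.
case: (lift_low_or_up j) => [lowj|upj].
  by rewrite !facet_fun_low // (inj_eq lift_inj) eq_sym (negbTE ij) (negbTE (lift_t_neq j)).
by rewrite !facet_fun_up // !leNgt upj (lt_trans low upj).
Qed.

Lemma facet_up_sep i j : a 0 t < a 0 (lift t j) -> a 0 (lift t j) < a 0 (lift t i) ->
  exists y, facet j y /\ ~ facet i y.
Proof.
move=> up ji; set p := lift t i in ji *; set q := lift t j in up ji *.
have pq : p != q by apply: contraTneq ji => ->; rewrite ltxx.
have SI := I_n_triple (lift_t_neq i) (lift_t_neq j) pq.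
have qS : q \in p |: [set q; t] by rewrite !inE eqxx orbT.
have gp : ga (p |: [set q; t]) = p.
  apply: gaE SI _ _; first by rewrite !inE eqxx.
  move=> l; rewrite !inE => /or3P[]/eqP->; rewrite ?lexx ?(ltW ji) //.
  exact/ltW/(lt_trans up).
exists (selpt (reselect ga (p |: [set q; t]) q)); rewrite !facet_reselect // gp.
have upi := lt_trans up ji.
split; first by rewrite !facet_fun_up // lexx (ltW ji).
by rewrite !facet_fun_up // lexx leNgt ji => /eqP; rewrite eq_sym oner_eq0.
Qed.

Lemma facet_inj : injective facet.
Proof.
move=> i j eF; apply/eqP; apply: contraT => ij.
have sep k k' : facet k = facet k' -> (exists y, facet k' y /\ ~ facet k y) -> false.
  by move=> -> [y []].
case: (lift_low_or_up i) => [lowi|upi]; first exact: sep eF (facet_low_sep ij lowi).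
case: (lift_low_or_up j) => [lowj|upj].
  by apply: sep (esym eF) (facet_low_sep _ lowj); rewrite eq_sym.
have := a_neq_above (lift_t_neq i) (lift_t_neq j) _ upi.
rewrite (inj_eq lift_inj) => /(_ ij); rewrite neq_lt => /orP[ij_lt|ji_lt].
  exact: sep (esym eF) (facet_up_sep upi ij_lt).
exact: sep eF (facet_up_sep upj ji_lt).
Qed.

(* All points of Q have the same coordinate sum, so affinely related
   functionals cut out the same face. *)
Lemma face_affine c c' gam del : del != 0 -> (forall l, c 0 l = gam + del * c' 0 l) ->
  face_at c = face_at c'.
Proof.
move=> del0 cc'; apply: functional_extensionality => x.
apply: propositional_extensionality; rewrite /face_at.
split=> -[Qx e]; split=> //; move: e; rewrite !(dot_affine (I := II) cc') //.
  by move/addrI/(mulfI del0).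
by move->.
Qed.

Section Facet.
Variable c : pt.
Hypothesis c_le : forall x, Q x -> dot c x <= dot c v.
Hypothesis c_face_rank : exists k (x : 'I_k.+1 -> pt),
  (forall j, face_at c (x j)) /\ \rank (Defs.diffmx x) = n.-1.

Let c_ga : maxsel II c ga := valid_maxsel c_le.

Lemma c_t_le_ga S : S \in II -> c 0 t <= c 0 (ga S).
Proof. by move=> SI; apply: (c_ga SI).2 (I_n_max SI). Qed.

(* Since t lies in every S, the c-ties all sit at levels >= c_t; a labelling
   that depends only on those levels is tie-invariant, and three labels would
   force the face of c to have rank at most n - 2. *)
Lemma facet_no_three_levels (f : 'I_n.+1 -> nat) z0 z1 z2 :
  f z0 = 0%N -> f z1 = 1%N -> f z2 = 2%N ->
  (forall l l', c 0 t <= c 0 l -> c 0 l = c 0 l' -> f l = f l') -> False.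
Proof.
move=> f0 f1 f2 f_lvl; have [k [x [x_face rk]]] := c_face_rank.
suff : (\rank (Defs.diffmx x) + 3 <= n.+1)%N by rewrite rk; lia.
apply: (face_rank_le (f := f) (rho := tnth [tuple z0; z1; z2]) c_ga).
- by move=> S SI l lS cl; apply: f_lvl => //; rewrite cl c_t_le_ga.
- by case=> [[|[|[|]]]] //= _; rewrite ?f0 ?f1 ?f2.
- by move=> j; have [Qx e] := x_face j; rewrite e -vertex_selpt.
Qed.

Lemma facet_one_below j j' :
  j != t -> j' != t -> c 0 j < c 0 t -> c 0 j' < c 0 t -> j = j'.
Proof.
move=> jt j't cj cj'; apply/eqP; apply: contraT => jj'; exfalso.
have above l : c 0 t <= c 0 l -> (l == j) = false /\ (l == j') = false.
  by move=> cl; split; apply: contraTF cl; move/eqP->; rewrite -ltNge.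
apply: (facet_no_three_levels (z0 := j) (z1 := j') (z2 := t)
  (f := fun l => if l == j then 0%N else if l == j' then 1%N else 2%N)).
- by rewrite eqxx.
- by rewrite eq_sym (negbTE jj') eqxx.
- by rewrite eq_sym (negbTE jt) eq_sym (negbTE j't).
move=> l l' cl cll'; have [-> ->] := above l cl.
by rewrite cll' in cl; have [-> ->] := above l' cl.
Qed.

Lemma facet_below_above j u : c 0 j < c 0 t -> c 0 u <= c 0 t.
Proof.
move=> cj; rewrite leNgt; apply/negP => cu.
have above l : c 0 t <= c 0 l -> (l == j) = false.
  by move=> cl; apply: contraTF cl; move/eqP->; rewrite -ltNge.
apply: (facet_no_three_levels (z0 := j) (z1 := u) (z2 := t)
  (f := fun l => if l == j then 0%N else if c 0 t < c 0 l then 1%N else 2%N)).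
- by rewrite eqxx.
- by rewrite above ?cu // ltW.
- by rewrite above // ltxx.
move=> l l' cl cll'; have cl' : c 0 t <= c 0 l' by rewrite -cll'.
by rewrite !above // cll'.
Qed.

Lemma facet_above_level u u' : c 0 t < c 0 u -> c 0 t < c 0 u' -> c 0 u = c 0 u'.
Proof.
have levels p q : c 0 t < c 0 p -> c 0 p < c 0 q -> False.
  move=> cp pq; apply: (facet_no_three_levels (z0 := q) (z1 := p) (z2 := t)
    (f := fun l => if c 0 q <= c 0 l then 0%N else if c 0 p <= c 0 l then 1%N else 2%N)).
  - by rewrite lexx.
  - by rewrite leNgt pq lexx.
  - by rewrite !leNgt cp (lt_trans cp pq).
  by move=> l l' _ ->.
move=> cu cu'; case: (ltgtP (c 0 u) (c 0 u')) => // [uu'|u'u]; exfalso.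
  exact: levels cu uu'.
exact: levels cu' u'u.
Qed.

Lemma facet_below j : j != t -> c 0 j < c 0 t -> exists i, face_at c = facet i.
Proof.
move=> jt cj.
have c_rest l : l != j -> c 0 l = c 0 t.
  move=> lj; have [-> //|lt] := eqVneq l t.
  apply/eqP; rewrite eq_le (facet_below_above _ cj) /= leNgt.
  by apply: contra lj => cl; rewrite (facet_one_below lt jt cl cj).
case: (unliftP t j) jt cj c_rest => [i ->|->]; last by rewrite eqxx.
move=> _ cj c_rest.
have low : a 0 (lift t i) < a 0 t.
  case: (lift_low_or_up i) => // up; exfalso.
  have SI := I_n_pair (lift_t_neq i).
  have gp : ga [set lift t i; t] = lift t i.
    apply: gaE SI _ _; first by rewrite !inE eqxx.
    by move=> l; rewrite !inE => /orP[]/eqP->; rewrite ?(ltW up).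
  by have := c_t_le_ga SI; rewrite gp leNgt cj.
exists i; apply: (face_affine (gam := c 0 t) (del := c 0 t - c 0 (lift t i))).
  by rewrite subr_eq0 gt_eqF.
move=> l; rewrite facet_fun_low //; have [<-|pl] := eqVneq (lift t i) l.
  by rewrite /= mulr1n; ring.
by rewrite c_rest 1?eq_sym //= mulr0n; ring.
Qed.

Lemma facet_upset u0 : (forall l, c 0 t <= c 0 l) -> c 0 t < c 0 u0 ->
  (forall l, c 0 t < c 0 l -> a 0 u0 <= a 0 l) ->
  a 0 t < a 0 u0 /\ forall l, (a 0 u0 <= a 0 l) = (c 0 t < c 0 l).
Proof.
move=> c_ge cu0 u0_min.
have u0t : u0 != t by apply: contraTneq cu0 => ->; rewrite ltxx.
have au0 : a 0 t < a 0 u0.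
  have := a_neq_t u0t; rewrite neq_lt => /orP[low|//]; exfalso.
  have SI := I_n_pair u0t.
  have gt : ga [set u0; t] = t.
    apply: gaE SI (I_n_max SI) _.
    by move=> l; rewrite !inE => /orP[]/eqP->; rewrite ?(ltW low).
  by have := (c_ga SI).2 u0; rewrite gt !inE eqxx leNgt cu0 => /(_ isT).
split=> // l; apply/idP/idP => [al|]; last exact: u0_min.
rewrite ltNge; apply/negP => cl.
have clt : c 0 l = c 0 t by apply/eqP; rewrite eq_le cl c_ge.
have lt : l != t by apply: contraTneq al => ->; rewrite -ltNge.
have lu0 : l != u0 by apply: contraTneq cu0 => <-; rewrite clt ltxx.
have au0l : a 0 u0 < a 0 l by rewrite lt_neqAle al andbT a_neq_above // eq_sym.
have SI := I_n_triple lt u0t lu0.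
have gl : ga (l |: [set u0; t]) = l.
  apply: gaE SI _ _; first by rewrite !inE eqxx.
  move=> l'; rewrite !inE => /or3P[]/eqP->; rewrite ?lexx ?(ltW au0l) //.
  exact/ltW/(lt_trans au0 au0l).
by have := (c_ga SI).2 u0; rewrite gl clt !inE eqxx orbT leNgt cu0 => /(_ isT).
Qed.

Lemma facet_above u : (forall l, c 0 t <= c 0 l) -> c 0 t < c 0 u ->
  exists i, face_at c = facet i.
Proof.
move=> c_ge cu.
pose u0 := Order.arg_min u (fun l => c 0 t < c 0 l) (fun l => a 0 l).
have [cu0 u0_min] : c 0 t < c 0 u0 /\ forall l, c 0 t < c 0 l -> a 0 u0 <= a 0 l.
  by rewrite /u0; case: arg_minP => // l cl l_min; split=> // l' /l_min.
have [au0 upset] := facet_upset c_ge cu0 u0_min.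
case: (unliftP t u0) au0 upset => [i ->|->] au0 upset; last by rewrite ltxx in au0.
exists i; apply: (face_affine (gam := c 0 t) (del := c 0 u - c 0 t)).
  by rewrite subr_eq0 gt_eqF.
move=> l; rewrite facet_fun_up // upset; case: (boolP (c 0 t < c 0 l)) => cl /=.
  by rewrite mulr1n (facet_above_level cl cu); ring.
have -> : c 0 l = c 0 t by apply/eqP; rewrite eq_le c_ge andbT leNgt.
by rewrite mulr0n; ring.
Qed.

End Facet.

Lemma facet_through_eq G :
  (1 <= n)%N -> is_facet Q G n -> G v -> exists i, G = facet i.
Proof.
move=> n_gt0 [G_face [[k [x [Gx rk]]] G_le]] Gv.
have [c [c_le eG]] := face_through_point G_face Gv.
rewrite eG in Gx G_le *; rewrite -/(face_at c).
have c_face_rank : exists k (x : 'I_k.+1 -> pt),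
  (forall j, face_at c (x j)) /\ \rank (Defs.diffmx x) = n.-1 by exists k, x.
case: (boolP [exists j, (j != t) && (c 0 j < c 0 t)]).
  by move=> /existsP[j /andP[jt cj]]; apply: facet_below cj.
move=> below.
have c_ge l : c 0 t <= c 0 l.
  have [-> //|lt] := eqVneq l t; rewrite leNgt.
  by apply: contra below => cl; apply/existsP; exists l; rewrite lt.
case: (boolP [exists u, c 0 t < c 0 u]) => [/existsP[u cu]|above].
  by apply: facet_above cu.
have c_const l : c 0 l = c 0 t + 0 * (0 : pt) 0 l.
  rewrite mul0r addr0; apply/eqP; rewrite eq_le c_ge andbT leNgt.
  by apply: contra above => cl; apply/existsP; exists l.
have [[k' [y [Qy rky]]] _] := dim_Qbar.
suff : (n <= n.-1)%N by lia.
rewrite -{1}rky; apply: G_le => j; split=> //.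
by rewrite (dot_affine c_const (Qy j)) (dot_affine c_const v_in) !mul0r.
Qed.

End Vertex.

Lemma simple_Qbar : (1 <= n)%N -> is_simple Q.
Proof.
move=> n_gt0; exists n; split; first exact: dim_Qbar.
move=> v /vertex_unique_argmax[a [v_in a_le a_uniq]].
exists (facet a v); split; first exact: facet_inj v_in a_le a_uniq.
split=> [i|G].
  split; last by split.
  split; first exact (facet_is_face v_in a_le a_uniq i).
  exact (facet_dim v_in a_le a_uniq i).
exact (facet_through_eq v_in a_le a_uniq n_gt0).
Qed.

End Qbar.

Theorem mainTheorem11 (R : realType) (n : nat) (hn : (1 <= n)%N) :
  is_simple (Qbar R n) /\ has_dim (Qbar R n) n.
Proof. by split; [exact: simple_Qbar | exact: dim_Qbar]. Qed.
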